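(* Let $(V,d,k,q)$ be an instance of the individually fair $k$-center with outliers problem (IF$k$CO) as defined in the context and let $l\ge 0$ be an integer. Then the refined algorithm (Algorithm 3) described in the context, run with parameter $l$, outputs a feasible solution $(S,O,\sigma)$ for this instance, i.e. $|S|\le k$ and $|O|\le q$.
   Context: IF$k$CO instance: a finite set $V$ with $|V|=n$, a metric $d$ on $V$ (nonnegative, symmetric, $d_{ii}=0$, triangle inequality), and integers $k\ge 1$ and $q\ge 0$. For $i\in V$, $NR_q(i)$ is the distance from $i$ to its $\lceil (n-q)/k\rceil$-th nearest neighbor in $V$, where $i$ counts as its own (first) nearest neighbor. A solution is $(S,O,\sigma)$ with $S,O\subseteq V$ and $\sigma:V\setminus O\to S$; feasible if $|S|\le k$, $|O|\le q$. For $\beta>0$, procedure $A(\beta)$: set $P:=V$, $S:=\emptyset$; while $P\ne\emptyset$ and $|S|<k$: pick $s\in P$ minimizing $NR_q(i)$ over $i\in P$, set $S:=S\cup\{s\}$, $P:=\{i\in P: d_{is}>\beta\, NR_q(i)\}$; finally set $O:=P$ and let $\sigma(i)$ be a nearest center in $S$ for each $i\in V\setminus O$. Algorithm 2 is $A(2)$. Algorithm 3 (input: instance and integer $l\ge0$): compute $(S,O,\sigma):=$ output of Algorithm 2; set $t:=0$, $\beta_1:=1$, $\beta_2:=2$, $\beta:=\beta_1$. While $t<l$: run $A(\beta)$ obtaining $(S_\beta,O_\beta,\sigma_\beta)$; if $|O_\beta|>q$, set $\beta_1:=\beta$; if $|O_\beta|\le q$, set $(S,O,\sigma):=(S_\beta,O_\beta,\sigma_\beta)$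 and $\beta_2:=\beta$; in either case then set $\beta:=(\beta_1+\beta_2)/2$ and $t:=t+1$. Output $(S,O,\sigma)$. *)

From mathcomp Require Import all_boot all_order all_algebra.
Set Implicit Arguments. Unset Strict Implicit. Unset Printing Implicit Defensive.
Import Order.TTheory GRing.Theory Num.Theory.
Local Open Scope ring_scope.

Section IFkCO.
Variables (R : realFieldType) (V : finType) (d : V -> V -> R) (k q : nat).

Definition is_metric : Prop :=
  [/\ forall i j, 0 <= d i j,
      forall i j, d i j = d j i,
      forall i, d i i = 0 &
      forall i j l, d i l <= d i j + d j l].

(* m = ceil((n - q)/k) (equals 0 when n <= q) *)
Definition nr_index : nat := ((#|V| - q) + k.-1) %/ k.

(* NR_q(i): distance from i to its m-th nearest neighbour (i itself is the
   first, at distance 0); index m is read as max(m,1). *)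
Definition NR (i : V) : R :=
  nth 0 (sort <=%R [seq d i j | j <- enum V]) nr_index.-1.

(* A solution (S, O, sigma); sigma is only meaningful on V \ O. *)
Definition solution : Type := ({set V} * {set V} * (V -> V))%type.
Definition sol_S (x : solution) : {set V} := x.1.1.
Definition sol_O (x : solution) : {set V} := x.1.2.
Definition sol_sigma (x : solution) : V -> V := x.2.

Definition feasible (x : solution) : Prop :=
  (#|sol_S x| <= k)%N /\ (#|sol_O x| <= q)%N.

(* The while-loop of A(beta): A_loop beta P S P' S' means that starting from
   (P, S) some execution of the loop (with any tie-breaking) ends in (P', S'). *)
Inductive A_loop (beta : R) : {set V} -> {set V} -> {set V} -> {set V} -> Prop :=
| A_stop (P S : {set V}) : (P == set0) || (k <= #|S|)%N -> A_loop beta P S P S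
| A_step (P S : {set V}) (s : V) (P' S' : {set V}) :
    P != set0 -> (#|S| < k)%N -> s \in P ->
    (forall i, i \in P -> NR s <= NR i) ->
    A_loop beta [set i in P | beta * NR i < d i s] (s |: S) P' S' ->
    A_loop beta P S P' S'.

Definition A_out (beta : R) (x : solution) : Prop :=
  A_loop beta setT set0 (sol_O x) (sol_S x) /\
  forall i, i \notin sol_O x ->
    sol_sigma x i \in sol_S x /\
    forall s, s \in sol_S x -> d i (sol_sigma x i) <= d i s.

(* The loop of Algorithm 3: alg3_loop r b1 b2 b cur out means that, with r
   iterations remaining (r = l - t), bounds b1, b2, current beta b and current
   solution cur, the loop can end with output out. *)
Inductive alg3_loop : nat -> R -> R -> R -> solution -> solution -> Prop :=
| L_done b1 b2 b cur : alg3_loop 0 b1 b2 b cur cur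
| L_fail r b1 b2 b cur xb out :
    A_out b xb -> (q < #|sol_O xb|)%N ->
    alg3_loop r b b2 ((b + b2) / 2%:R) cur out ->
    alg3_loop r.+1 b1 b2 b cur out
| L_ok r b1 b2 b cur xb out :
    A_out b xb -> (#|sol_O xb| <= q)%N ->
    alg3_loop r b1 b ((b1 + b) / 2%:R) xb out ->
    alg3_loop r.+1 b1 b2 b cur out.

Definition alg3_out (l : nat) (x : solution) : Prop :=
  exists x0, A_out 2%:R x0 /\ alg3_loop l 1 2%:R 1 x0 x.

End IFkCO.

From Pilot Require Import Defs.
From mathcomp Require Import all_boot all_order all_algebra.
From mathcomp Require Import zify.
Import Order.TTheory GRing.Theory Num.Theory.
Set Implicit Arguments. Unset Strict Implicit. Unset Printing Implicit Defensive.
Local Open Scope ring_scope.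

(* A(2) repeatedly picks an uncovered point s of minimal NR and
   discards from P every point i with d(i,s) <= 2 NR(i).  Any point still in P
   is thus far from all chosen centers, so the balls B(s, NR s) around the
   centers are pairwise disjoint (triangle inequality, the later centers having
   larger NR), none of them meets P, and each contains at least
   m = ceil((n-q)/k) points by definition of NR.  If the loop stops with k
   centers, these balls cover at least k m >= n - q points, leaving at most q
   outliers.  So the initial solution of Algorithm 3 is feasible, and the
   binary search only replaces it by outputs of A(beta) with at most q
   outliers and, like every output of A, at most k centers.  All values of
   beta tried are nonnegative, which is what makes A(beta) terminate. *)

Lemma leq_mul_ceil_divn a k : (0 < k)%N -> (a <= k * ((a + k.-1) %/ k))%N.
Proof. by move=> k_gt0; lia. Qed.

Lemma ceil_divn_leq a k : (0 < k)%N -> ((a + k.-1) %/ k <= a)%N.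
Proof. by move=> k_gt0; rewrite -ltnS ltn_divLR //; nia. Qed.

Lemma count_le_nth_sort (disp : Order.disp_t) (T : orderType disp) (x0 : T)
    (s : seq T) n :
  (n < size s)%N -> (n < count (<=%O^~ (nth x0 (sort <=%O s) n)) s)%N.
Proof.
move=> lt_n_s; rewrite -(count_sort <=%O); set t := sort _ s.
have size_t : size t = size s by rewrite size_sort.
have size_take_t : size (take n.+1 t) = n.+1 by rewrite size_takel ?size_t.
have all_take : all (<=%O^~ (nth x0 t n)) (take n.+1 t).
  apply/(all_nthP x0) => i; rewrite size_take_t => lt_i_n.
  rewrite nth_take //; apply: le_sorted_leq_nth;
    rewrite ?sort_le_sorted ?inE ?size_t //.
  by apply: leq_ltn_trans lt_n_s; rewrite -ltnS.
rewrite -[t in count _ t](cat_take_drop n.+1 t) count_cat.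
by move: all_take; rewrite all_count size_take_t => /eqP ->; apply: leq_addr.
Qed.

Lemma card_set_count (T : finType) (p : pred T) :
  #|[set x | p x]| = count p (enum T).
Proof.
rewrite cardE /enum_mem size_filter count_filter.
by apply: eq_count => x; rewrite !inE andbT.
Qed.

Lemma cards_disjointU (T : finType) (A B : {set T}) :
  [disjoint A & B] -> #|A :|: B| = (#|A| + #|B|)%N.
Proof. by move=> disjAB; rewrite cardsU (disjoint_setI0 disjAB) cards0 subn0. Qed.

Section IFkCO.
Variables (R : realFieldType) (V : finType) (d : V -> V -> R) (k q : nat).
Hypothesis d_metric : is_metric d.
Hypothesis k_gt0 : (0 < k)%N.

Local Notation NR := (NR d k q).
Local Notation m := (nr_index V k q).
Local Notation A_loop := (A_loop d k q).
Local Notation A_out := (A_out d k q).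

Let d_ge0 i j : 0 <= d i j. Proof. by case: d_metric. Qed.
Let d_sym i j : d i j = d j i. Proof. by case: d_metric. Qed.
Let d_xx i : d i i = 0. Proof. by case: d_metric. Qed.
Let d_triangle i j l : d i l <= d i j + d j l. Proof. by case: d_metric. Qed.

Lemma NR_ge0 i : 0 <= NR i.
Proof.
rewrite /Defs.NR; set t := sort _ _.
have [lt_m_t | ] := ltnP m.-1 (size t); last by move=> ?; rewrite nth_default.
by have := mem_nth 0 lt_m_t; rewrite mem_sort => /mapP [j _ ->].
Qed.

Lemma nr_index_le_card : (m <= #|V|)%N.
Proof. exact: leq_trans (ceil_divn_leq _ k_gt0) (leq_subr _ _). Qed.

Lemma card_sub_le_mul_nr_index : (#|V| - q <= k * m)%N.
Proof. exact: leq_mul_ceil_divn. Qed.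

Definition ball s := [set x | d s x <= NR s].

Lemma nr_index_le_card_ball s : (m <= #|ball s|)%N.
Proof.
have := nr_index_le_card; rewrite /ball /Defs.NR; case: m => [//|n] lt_n_V.
rewrite card_set_count -(count_map (d s) (<=%O^~ _)) /=.
by apply: count_le_nth_sort; rewrite size_map -cardT.
Qed.

Lemma disjoint_balls s s' : NR s + NR s' < d s s' -> [disjoint ball s & ball s'].
Proof.
move=> far; apply/pred0P => x /=; rewrite !inE; apply/negP => /andP [xs xs'].
by move: far; rewrite ltNge (le_trans (d_triangle s x s')) // [d x s']d_sym lerD.
Qed.

Definition covered (S : {set V}) := \bigcup_(s in S) ball s.

Definition A2_invariant (P S : {set V}) :=
  [/\ {in S & P, forall s i, NR s <= NR i /\ 2%:R * NR i < d i s},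
      (#|S| * m <= #|covered S|)%N &
      [disjoint covered S & P]].

Lemma A2_invariant0 : A2_invariant setT set0.
Proof.
split=> [s i | | ]; rewrite ?inE ?cards0 //.
by apply/pred0P => x /=; rewrite /covered big_set0 inE.
Qed.

Lemma A2_invariant_step P S s :
  A2_invariant P S -> s \in P -> (forall i, i \in P -> NR s <= NR i) ->
  A2_invariant [set i in P | 2%:R * NR i < d i s] (s |: S).
Proof.
move=> [far card_cov disj] sP s_min.
have sS : s \notin S.
  apply/negP => sS; have [_] := far s s sS sP.
  by rewrite d_xx ltNge mulr_ge0 ?ler0n ?NR_ge0.
have cov_sS : covered (s |: S) = ball s :|: covered S.
  by rewrite /covered big_setU1.
have two_mul i : 2%:R * NR i = NR i + NR i by rewrite mulr_natl mulr2n.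
split.
- move=> s0 i; rewrite in_setU1 inE => /predU1P [-> | s0S] /andP [iP lt_i].
    by split; [apply: s_min|].
  exact: far.
- rewrite cov_sS cardsU1 sS mulSn cards_disjointU;
    first by rewrite leq_add ?nr_index_le_card_ball.
  apply: bigcup_disjoint => s0 s0S; apply: disjoint_balls.
  have [le_s0_s lt_2s] := far s0 s s0S sP.
  by apply: le_lt_trans lt_2s; rewrite two_mul lerD2l.
- rewrite cov_sS -setI_eq0 setIUl setU_eq0 !setI_eq0; apply/andP; split.
    apply/pred0P => x /=; rewrite !inE; apply/negP => /and3P [xs xP].
    rewrite d_sym ltNge (le_trans xs) // (le_trans (s_min x xP)) //.
    by rewrite two_mul lerDl NR_ge0.
  by apply: disjointWr disj; apply/subsetP => x; rewrite inE => /andP [].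
Qed.

Lemma A2_invariant_outliers P S :
  A2_invariant P S -> (P == set0) || (k <= #|S|)%N -> (#|P| <= q)%N.
Proof.
move=> [_ card_cov disj] /orP [/eqP -> | k_le_S]; first by rewrite cards0.
have := max_card (covered S :|: P); rewrite cards_disjointU //.
have := card_sub_le_mul_nr_index.
have : (k * m <= #|S| * m)%N by rewrite leq_mul2r k_le_S orbT.
lia.
Qed.

Lemma A2_loop_outliers P S P' S' :
  A_loop 2%:R P S P' S' -> A2_invariant P S -> (#|P'| <= q)%N.
Proof.
elim=> [P0 S0 stop /A2_invariant_outliers /(_ stop) // |].
by move=> P0 S0 s P1 S1 _ _ sP s_min _ IH inv; apply/IH/A2_invariant_step.
Qed.

Lemma A_loop_exists beta P S : 0 <= beta -> exists P' S', A_loop beta P S P' S'.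
Proof.
move=> beta_ge0; have [n] := ubnP #|P|; elim: n => // n IH in P S *.
rewrite ltnS => card_P.
have [stop | ] := boolP ((P == set0) || (k <= #|S|)%N).
  by exists P, S; apply: A_stop.
rewrite negb_or -ltnNge => /andP [P_neq0 lt_S_k].
have [s sP s_min] : exists2 s, s \in P & forall i, i \in P -> NR s <= NR i.
  by case/set0Pn: P_neq0 => x xP; case: (arg_minP NR xP) => s; exists s.
set P2 := [set i in P | beta * NR i < d i s].
have : P2 \subset P :\ s.
  apply/subsetP => i; rewrite !inE => /andP [iP]; rewrite iP andbT.
  by apply: contraTneq => ->; rewrite d_xx -leNgt mulr_ge0 ?NR_ge0.
move/subset_leq_card => card_P2.
have [|P' [S' loop]] := IH P2 (s |: S).
  by apply: leq_ltn_trans card_P2 _; move: card_P; rewrite (cardsD1 s P) sP.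
by exists P', S'; apply: A_step loop.
Qed.

Lemma A_loop_centers_sub beta P S P' S' : A_loop beta P S P' S' -> S \subset S'.
Proof.
by elim=> // P0 S0 s P1 S1 _ _ _ _ _; apply: subset_trans; apply: subsetUr.
Qed.

Lemma A_loop_no_centers beta P S P' S' :
  A_loop beta P S P' S' -> S' = set0 -> P' = P.
Proof.
case=> // P0 S0 s P1 S1 _ _ _ _ /A_loop_centers_sub /subsetP /(_ s) sS1 S1_0.
by move: sS1; rewrite S1_0 setU11 inE => /(_ isT).
Qed.

Lemma card_A_loop_centers beta P S P' S' :
  A_loop beta P S P' S' -> (#|S| <= k)%N -> (#|S'| <= k)%N.
Proof.
elim=> // P0 S0 s P1 S1 _ lt_S_k _ _ _ IH _; apply: IH.
by apply: leq_trans lt_S_k; rewrite cardsU1 -add1n leq_add2r leq_b1.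
Qed.

Lemma A_out_exists beta : 0 <= beta -> exists x, A_out beta x.
Proof.
move=> beta_ge0; have [O [S loop]] := A_loop_exists setT set0 beta_ge0.
case: (set_0Vmem S) => [S0 | [s0 s0S]].
  exists (S, O, id); split=> // i.
  by rewrite /sol_O /= (A_loop_no_centers loop S0) inE.
exists (S, O, fun i => [arg min_(s < s0 in S) d i s]%O); split=> // i _.
by rewrite /sol_sigma /sol_S /=; case: (arg_minP (d i) s0S).
Qed.

Lemma card_A_out_centers beta x : A_out beta x -> (#|sol_S x| <= k)%N.
Proof. by case=> loop _; apply: card_A_loop_centers loop _; rewrite cards0. Qed.

Lemma A2_out_feasible x : A_out 2%:R x -> feasible k q x.
Proof.
move=> Ax; split; first exact: card_A_out_centers Ax.
by case: Ax => loop _; apply: A2_loop_outliers loop A2_invariant0.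
Qed.

Lemma alg3_loop_exists r b1 b2 b cur :
  0 <= b1 -> 0 <= b2 -> 0 <= b -> exists out, alg3_loop d k q r b1 b2 b cur out.
Proof.
have mid_ge0 (a c : R) : 0 <= a -> 0 <= c -> 0 <= (a + c) / 2%:R.
  by move=> a_ge0 c_ge0; rewrite divr_ge0 ?addr_ge0.
elim: r b1 b2 b cur => [|r IH] b1 b2 b cur b1_ge0 b2_ge0 b_ge0.
  by exists cur; apply: L_done.
have [xb Axb] := A_out_exists b_ge0.
have [fail | ok] := ltnP q #|sol_O xb|.
  have [out loop] := IH b b2 _ cur b_ge0 b2_ge0 (mid_ge0 _ _ b_ge0 b2_ge0).
  by exists out; apply: L_fail Axb fail loop.
have [out loop] := IH b1 b _ xb b1_ge0 b_ge0 (mid_ge0 _ _ b1_ge0 b_ge0).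
by exists out; apply: L_ok Axb ok loop.
Qed.

Lemma alg3_loop_feasible r b1 b2 b cur out :
  alg3_loop d k q r b1 b2 b cur out -> feasible k q cur -> feasible k q out.
Proof.
elim=> // {}r {}b1 {}b2 {}b {}cur xb {}out Axb ok _ IH _.
by apply: IH; split=> //; apply: card_A_out_centers Axb.
Qed.

End IFkCO.

Theorem lemma5 (R : realFieldType) (V : finType) (d : V -> V -> R)
    (k q l : nat) (hd : is_metric d) (hk : (1 <= k)%N) :
  (exists x, alg3_out d k q l x) /\
  (forall x, alg3_out d k q l x -> feasible k q x).
Proof.
have two_ge0 : (0 : R) <= 2%:R := ler0n _ 2.
split=> [|x [x0 [Ax0 loop]]].
  have [x0 Ax0] := A_out_exists k q hd two_ge0.
  have [x loop] := alg3_loop_exists k q hd l x0 ler01 two_ge0 ler01.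
  by exists x, x0.
exact: alg3_loop_feasible loop (A2_out_feasible hd hk Ax0).
Qed.
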